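(* Let $A,B$ be rings and $M$ a $B$-$A$ bimodule. If either (1) $M$ is a separable bimodule, or (2) the evaluation map $\mathrm{ev}_M:M\otimes_A{}^*M\to B$ is injective, then $M$ is a formally smooth bimodule.
   Context: Left $B$-linear maps are written on the right of arguments; ${}^*M:={}_B\mathrm{Hom}(M,B)$ is an $A$-$B$ bimodule via $(m)(afb)=((ma)f)b$; $\mathrm{ev}_M(m\otimes_Af)=(m)f$ is a $B$-bimodule map. $M$ is separable if $\mathrm{ev}_M$ is a split epimorphism of $B$-bimodules. $\mathcal{E}_{M,B}$ is the class of $B$-bimodule maps $f:Y\to Y'$ such that ${}_B\mathrm{Hom}(M,f):{}_B\mathrm{Hom}(M,Y)\to{}_B\mathrm{Hom}(M,Y')$ has a right inverse as an $A$-$B$ bimodule map. A $B$-bimodule $P$ is $\mathcal{E}_{M,B}$-projective if for every $f:Y\to Y'$ in $\mathcal{E}_{M,B}$ every $B$-bimodule map $P\to Y'$ factors through $f$. $M$ is a formally smooth bimodule if $\mathrm{Ker}(\mathrm{ev}_M)$ is an $\mathcal{E}_{M,B}$-projective $B$-bimodule. *)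

From HB Require Import structures.
From mathcomp Require Import all_boot all_algebra.
Set Implicit Arguments. Unset Strict Implicit. Unset Printing Implicit Defensive.
Import GRing.Theory.
Local Open Scope ring_scope.

Definition additive_fun (U V : zmodType) (g : U -> V) : Prop :=
  forall x y, g (x + y) = g x + g y.

Record bimod_law (R S : pzRingType) (V : zmodType)
    (la : R -> V -> V) (ra : V -> S -> V) : Prop := BimodLaw {
  la_addr : forall r x y, la r (x + y) = la r x + la r y;
  la_addl : forall r r' x, la (r + r') x = la r x + la r' x;
  la_mul  : forall r r' x, la (r * r') x = la r (la r' x);
  la_one  : forall x, la 1 x = x;
  ra_addl : forall x y s, ra (x + y) s = ra x s + ra y s;
  ra_addr : forall x s s', ra x (s + s') = ra x s + ra x s';
  ra_mul  : forall x s s', ra x (s * s') = ra (ra x s) s';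
  ra_one  : forall x, ra x 1 = x;
  la_ra   : forall r x s, la r (ra x s) = ra (la r x) s }.

Definition bimod_map (R S : pzRingType) (U V : zmodType)
    (laU : R -> U -> U) (raU : U -> S -> U)
    (laV : R -> V -> V) (raV : V -> S -> V) (g : U -> V) : Prop :=
  [/\ additive_fun g,
      forall r x, g (laU r x) = laV r (g x)
    & forall x s, g (raU x s) = raV (g x) s].

Definition bimod_map_on (R S : pzRingType) (U V : zmodType) (P : U -> Prop)
    (laU : R -> U -> U) (raU : U -> S -> U)
    (laV : R -> V -> V) (raV : V -> S -> V) (g : U -> V) : Prop :=
  [/\ forall x y, P x -> P y -> g (x + y) = g x + g y,
      forall r x, P x -> g (laU r x) = laV r (g x)
    & forall x s, P x -> g (raU x s) = raV (g x) s].

Definition regl (B : pzRingType) : B -> B -> B := fun b x => b * x.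
Definition regr (B : pzRingType) : B -> B -> B := fun x b => x * b.

Section Bimodules.
Context (A B : pzRingType) (M : zmodType)
        (laM : B -> M -> M) (raM : M -> A -> M).

Definition leftlin (Y : zmodType) (laY : B -> Y -> Y) (g : M -> Y) : Prop :=
  additive_fun g /\ forall b m, g (laM b m) = laY b (g m).

(** elements of *M = _B Hom(M, B) *)
Definition dual_elt (f : M -> B) : Prop := leftlin (@regl B) f.

(** A-balanced biadditive maps  M x *M -> Z ;  (m)(a f) = (m a) f *)
Definition balanced (Z : zmodType) (phi : M -> (M -> B) -> Z) : Prop :=
  [/\ forall m m' f, dual_elt f -> phi (m + m') f = phi m f + phi m' f,
      forall m f f', dual_elt f -> dual_elt f' ->
        phi m (fun x => f x + f' x) = phi m f + phi m f'
    & forall m a f, dual_elt f -> phi (raM m a) f = phi m (fun x => f (raM x a))].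

(** (T, t) is the tensor product M (x)_A *M, t m f = m (x) f *)
Definition is_tensor_dual (T : zmodType) (t : M -> (M -> B) -> T) : Prop :=
  balanced t /\
  forall (Z : zmodType) (phi : M -> (M -> B) -> Z), balanced phi ->
    exists psi : T -> Z,
      [/\ additive_fun psi,
          forall m f, dual_elt f -> psi (t m f) = phi m f
        & forall psi' : T -> Z, additive_fun psi' ->
            (forall m f, dual_elt f -> psi' (t m f) = phi m f) ->
            forall x, psi' x = psi x].

Definition tensor_bimod (T : zmodType) (t : M -> (M -> B) -> T)
    (laT : B -> T -> T) (raT : T -> B -> T) : Prop :=
  [/\ bimod_law laT raT,
      forall b m f, dual_elt f -> laT b (t m f) = t (laM b m) f
    & forall m f b, dual_elt f -> raT (t m f) b = t m (fun x => f x * b)].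

Definition is_ev (T : zmodType) (t : M -> (M -> B) -> T) (ev : T -> B) : Prop :=
  additive_fun ev /\ forall m f, dual_elt f -> ev (t m f) = f m.

Definition separable_bimod (T : zmodType) (laT : B -> T -> T)
    (raT : T -> B -> T) (ev : T -> B) : Prop :=
  exists sigma : B -> T,
    bimod_map (@regl B) (@regr B) laT raT sigma /\ forall b, ev (sigma b) = b.

(** f : Y -> Y' (a B-bimodule map) lies in E_{M,B}: _B Hom(M, f) has a right
    inverse s which is an A-B-bimodule map, where the A-B action on
    _B Hom(M, Y) is (m)(a g b) = ((m a) g) b. *)
Definition in_E (Y Y' : zmodType) (laY : B -> Y -> Y) (raY : Y -> B -> Y)
    (laY' : B -> Y' -> Y') (raY' : Y' -> B -> Y') (f : Y -> Y') : Prop :=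
  bimod_map laY raY laY' raY' f /\
  exists s : (M -> Y') -> (M -> Y),
    forall g, leftlin laY' g ->
      [/\ leftlin laY (s g),
          forall g', leftlin laY' g' ->
            forall m, s (fun x => g x + g' x) m = s g m + s g' m,
          forall a m, s (fun x => g (raM x a)) m = s g (raM m a),
          forall b m, s (fun x => raY' (g x) b) m = raY (s g m) b
        & forall m, f (s g m) = g m].

Definition E_projective (T : zmodType) (P : T -> Prop)
    (laT : B -> T -> T) (raT : T -> B -> T) : Prop :=
  forall (Y Y' : zmodType) (laY : B -> Y -> Y) (raY : Y -> B -> Y)
         (laY' : B -> Y' -> Y') (raY' : Y' -> B -> Y'),
    bimod_law laY raY -> bimod_law laY' raY' ->
    forall f : Y -> Y', in_E laY raY laY' raY' f ->
    forall h : T -> Y', bimod_map_on P laT raT laY' raY' h ->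
    exists g : T -> Y,
      bimod_map_on P laT raT laY raY g /\ forall x, P x -> f (g x) = h x.

Definition formally_smooth_bimod (T : zmodType) (laT : B -> T -> T)
    (raT : T -> B -> T) (ev : T -> B) : Prop :=
  E_projective (fun x => ev x = 0) laT raT.

End Bimodules.

(* If ev_M is injective its kernel is zero, and the zero bimodule is trivially
   E_{M,B}-projective.  If sigma splits ev_M, then x |-> x - sigma (ev_M x) is a
   bimodule retraction of M (x)_A *M onto Ker(ev_M), so it suffices that
   M (x)_A *M itself is E_{M,B}-projective.  Given f in E_{M,B} with A-B section
   s of _B Hom(M, f) and h : M (x)_A *M -> Y', the map
   m (x) phi |-> s (h (- (x) phi)) m is well defined (s respects the A-action)
   and lifts h through f. *)
From mathcomp Require Import all_boot all_algebra.
From Stdlib Require Import FunctionalExtensionality.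
Set Implicit Arguments. Unset Strict Implicit.
Import GRing.Theory.
Local Open Scope ring_scope.

Section AdditiveFun.
Variables (U V : zmodType) (g : U -> V).
Hypothesis g_add : additive_fun g.

Lemma additive_fun0 : g 0 = 0.
Proof. by apply: (@addrI _ (g 0)); rewrite -g_add !addr0. Qed.

Lemma additive_funN x : g (- x) = - g x.
Proof. by apply/eqP; rewrite -subr_eq0 opprK addrC -g_add subrr additive_fun0. Qed.

Lemma additive_funB x y : g (x - y) = g x - g y.
Proof. by rewrite g_add additive_funN. Qed.

End AdditiveFun.

Lemma bimod_law_la_additive (R S : pzRingType) (V : zmodType) la ra :
  @bimod_law R S V la ra -> forall r, additive_fun (la r).
Proof. by move=> hV r x y; rewrite (la_addr hV). Qed.

Lemma bimod_law_ra_additive (R S : pzRingType) (V : zmodType) la ra :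
  @bimod_law R S V la ra -> forall s, additive_fun (ra ^~ s).
Proof. by move=> hV s x y; rewrite (ra_addl hV). Qed.

Section KernelRetraction.
Variables (R S : pzRingType) (U V : zmodType).
Variables (laU : R -> U -> U) (raU : U -> S -> U).
Variables (laV : R -> V -> V) (raV : V -> S -> V).
Hypothesis hU : bimod_law laU raU.
Variables (e : U -> V) (sigma : V -> U).
Hypothesis e_bimod : bimod_map laU raU laV raV e.
Hypothesis sigma_bimod : bimod_map laV raV laU raU sigma.
Hypothesis e_sigma : forall v, e (sigma v) = v.

Definition kernel_proj (x : U) : U := x - sigma (e x).

Lemma kernel_proj_ker x : e (kernel_proj x) = 0.
Proof. by case: e_bimod => e_add _ _; rewrite additive_funB // e_sigma subrr. Qed.

Lemma kernel_proj_id x : e x = 0 -> kernel_proj x = x.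
Proof.
by case: sigma_bimod => s_add _ _ ex0; rewrite /kernel_proj ex0 additive_fun0 ?subr0.
Qed.

Lemma kernel_proj_bimod_map : bimod_map laU raU laU raU kernel_proj.
Proof.
case: e_bimod => e_add e_l e_r; case: sigma_bimod => s_add s_l s_r.
rewrite /kernel_proj; split=> [x y | r x | x s].
- by rewrite e_add s_add opprD addrACA.
- by rewrite e_l s_l (additive_funB (bimod_law_la_additive hU r)).
- by rewrite e_r s_r (additive_funB (bimod_law_ra_additive hU s)).
Qed.

End KernelRetraction.

Section Projectivity.
Variables (A B : pzRingType) (M : zmodType).
Variables (laM : B -> M -> M) (raM : M -> A -> M).
Variables (T : zmodType) (laT : B -> T -> T) (raT : T -> B -> T).

Lemma E_projective_retract (P : T -> Prop) (p : T -> T) :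
  bimod_map laT raT laT raT p -> (forall x, P (p x)) ->
  (forall x, P x -> p x = x) ->
  E_projective laM raM (fun _ => True) laT raT ->
  E_projective laM raM P laT raT.
Proof.
move=> [p_add p_l p_r] Pp p_id projT Y Y' laY raY laY' raY' hY hY' f hf h
  [h_add h_l h_r].
have hp_bimod : bimod_map_on (fun _ => True) laT raT laY' raY' (fun x => h (p x)).
  split=> [x y | r x | x s] *; [by rewrite p_add h_add | by rewrite p_l h_l |].
  by rewrite p_r h_r.
have [g [[g_add g_l g_r] fg]] := projT _ _ _ _ _ _ hY hY' f hf _ hp_bimod.
exists g; split; first by split=> *; [apply: g_add | apply: g_l | apply: g_r].
by move=> x Px; rewrite fg // p_id.
Qed.

Lemma E_projective_zero (P : T -> Prop) :
  P 0 -> (forall x, P x -> x = 0) -> E_projective laM raM P laT raT.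
Proof.
move=> P0 Pzero Y Y' laY raY laY' raY' hY _ f [[f_add _ _] _] h [h_add _ _].
exists (fun _ => 0); split.
- split=> [x y _ _ | r x _ | x s _]; first by rewrite addr0.
  + by rewrite (additive_fun0 (bimod_law_la_additive hY r)).
  + by rewrite (additive_fun0 (bimod_law_ra_additive hY s)).
- move=> x /Pzero ->; rewrite (additive_fun0 f_add).
  by apply: (@addrI _ (h 0)); rewrite -h_add ?addr0.
Qed.

End Projectivity.

Lemma dual_elt_mulr (B : pzRingType) (M : zmodType) (laM : B -> M -> M)
    (phi : M -> B) (b : B) :
  dual_elt laM phi -> dual_elt laM (fun x => phi x * b).
Proof.
case=> phi_add phi_l; split=> [x y | c m]; first by rewrite phi_add mulrDl.
by rewrite phi_l /regl mulrA.
Qed.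

Definition hom_section (A B : pzRingType) (M : zmodType)
    (laM : B -> M -> M) (raM : M -> A -> M) (Y Y' : zmodType)
    (laY : B -> Y -> Y) (raY : Y -> B -> Y) (laY' : B -> Y' -> Y')
    (raY' : Y' -> B -> Y') (f : Y -> Y') (s : (M -> Y') -> (M -> Y)) : Prop :=
  forall g, leftlin laM laY' g ->
    [/\ leftlin laM laY (s g),
        forall g', leftlin laM laY' g' ->
          forall m, s (fun x => g x + g' x) m = s g m + s g' m,
        forall a m, s (fun x => g (raM x a)) m = s g (raM m a),
        forall b m, s (fun x => raY' (g x) b) m = raY (s g m) b
      & forall m, f (s g m) = g m].

Section TensorDual.
Variables (A B : pzRingType) (M : zmodType).
Variables (laM : B -> M -> M) (raM : M -> A -> M).
Variables (T : zmodType) (t : M -> (M -> B) -> T).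
Variables (laT : B -> T -> T) (raT : T -> B -> T).
Hypothesis hT : is_tensor_dual laM raM t.
Hypothesis hTb : tensor_bimod laM t laT raT.

Lemma tensor_dual_ext (Z : zmodType) (u1 u2 : T -> Z) :
  additive_fun u1 -> additive_fun u2 ->
  (forall m phi, dual_elt laM phi -> u1 (t m phi) = u2 (t m phi)) ->
  forall x, u1 x = u2 x.
Proof.
case: hT => [[t_addl t_addr t_bal] univ] u1_add u2_add u12 x.
have u1t_bal : balanced laM raM (fun m phi => u1 (t m phi)).
  split=> [m m' phi dphi | m phi phi' dphi dphi' | m a phi dphi].
  - by rewrite t_addl // u1_add.
  - by rewrite t_addr // u1_add.
  - by rewrite t_bal.
have [psi [_ _ psi_uniq]] := univ Z _ u1t_bal.
by rewrite (psi_uniq u1) // (psi_uniq u2) // => m phi dphi; rewrite u12.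
Qed.

Lemma tensor_bimod_ext (Y : zmodType) (laY : B -> Y -> Y) (raY : Y -> B -> Y)
    (u : T -> Y) :
  bimod_law laY raY -> additive_fun u ->
  (forall b m phi, dual_elt laM phi -> u (laT b (t m phi)) = laY b (u (t m phi))) ->
  (forall b m phi, dual_elt laM phi -> u (raT (t m phi) b) = raY (u (t m phi)) b) ->
  bimod_map laT raT laY raY u.
Proof.
case: hTb => lawT _ _ hY u_add u_l u_r; split=> // [b | x b].
- apply: tensor_dual_ext => [x y | x y | m phi dphi]; last exact: u_l.
  + by rewrite (la_addr lawT) u_add.
  + by rewrite u_add (la_addr hY).
- move: x; apply: tensor_dual_ext => [x y | x y | m phi dphi]; last exact: u_r.
  + by rewrite (ra_addl lawT) u_add.
  + by rewrite u_add (ra_addl hY).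
Qed.

Lemma ev_bimod_map (ev : T -> B) :
  is_ev laM t ev -> bimod_map laT raT (@regl B) (@regr B) ev.
Proof.
case: hTb => lawT t_l t_r [ev_add ev_t].
have lawB : bimod_law (@regl B) (@regr B).
  by split=> *; rewrite /regl /regr ?mulrDr ?mulrDl ?mulrA ?mul1r ?mulr1.
apply: tensor_bimod_ext => // b m phi dphi.
- by rewrite t_l // !ev_t //; case: dphi => _ ->.
- by rewrite t_r ?ev_t //; exact: dual_elt_mulr.
Qed.

Section Lift.
Variables (Y Y' : zmodType) (laY : B -> Y -> Y) (raY : Y -> B -> Y).
Variables (laY' : B -> Y' -> Y') (raY' : Y' -> B -> Y').
Hypothesis hY : bimod_law laY raY.
Variables (f : Y -> Y') (s : (M -> Y') -> (M -> Y)).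
Hypothesis f_add : additive_fun f.
Hypothesis hs : hom_section laM raM laY raY laY' raY' f s.
Variable h : T -> Y'.
Hypothesis h_bimod : bimod_map laT raT laY' raY' h.

Definition tensor_slice (phi : M -> B) : M -> Y' := fun m => h (t m phi).

Lemma tensor_slice_leftlin phi :
  dual_elt laM phi -> leftlin laM laY' (tensor_slice phi).
Proof.
case: hT => [[t_addl _ _] _] dphi; case: hTb => _ t_l _; case: h_bimod => h_add h_l _.
by split=> [x y | b m]; rewrite /tensor_slice ?t_addl ?h_add // -t_l // h_l.
Qed.

Lemma tensor_slice_add phi phi' :
  dual_elt laM phi -> dual_elt laM phi' ->
  tensor_slice (fun x => phi x + phi' x) =
  (fun x => tensor_slice phi x + tensor_slice phi' x).
Proof.
case: hT => [[_ t_addr _] _] dphi dphi'; case: h_bimod => h_add _ _.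
by apply: functional_extensionality => x; rewrite /tensor_slice t_addr // h_add.
Qed.

Lemma tensor_slice_mulr phi b :
  dual_elt laM phi ->
  tensor_slice (fun x => phi x * b) = (fun x => raY' (tensor_slice phi x) b).
Proof.
case: hTb => _ _ t_r dphi; case: h_bimod => _ _ h_r.
by apply: functional_extensionality => x; rewrite /tensor_slice -t_r // h_r.
Qed.

Lemma section_slice_balanced :
  balanced laM raM (fun m phi => s (tensor_slice phi) m).
Proof.
case: hT => [[_ _ t_bal] _].
split=> [m m' phi dphi | m phi phi' dphi dphi' | m a phi dphi].
- by have [[s_add _] _ _ _ _] := hs (tensor_slice_leftlin dphi); rewrite s_add.
- have [_ s_add _ _ _] := hs (tensor_slice_leftlin dphi).
  by rewrite tensor_slice_add // s_add //; apply: tensor_slice_leftlin.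
- have [_ _ s_bal _ _] := hs (tensor_slice_leftlin dphi).
  rewrite -s_bal; congr (s _ m); apply: functional_extensionality => x.
  by rewrite /tensor_slice t_bal.
Qed.

Lemma tensor_lift :
  exists g : T -> Y, bimod_map laT raT laY raY g /\ forall x, f (g x) = h x.
Proof.
case: hT => _ univ; case: hTb => _ t_l t_r; case: h_bimod => h_add _ _.
have [g [g_add g_t _]] := univ _ _ section_slice_balanced.
exists g; split.
- apply: tensor_bimod_ext => // b m phi dphi.
    have [[_ s_l] _ _ _ _] := hs (tensor_slice_leftlin dphi).
    by rewrite t_l // !g_t // s_l.
  have [_ _ _ s_r _] := hs (tensor_slice_leftlin dphi).
  by rewrite t_r // !g_t ?tensor_slice_mulr ?s_r //; apply: dual_elt_mulr.
- apply: tensor_dual_ext => [x y | // | m phi dphi]; first by rewrite g_add f_add.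
  by have [_ _ _ _ f_s] := hs (tensor_slice_leftlin dphi); rewrite g_t // f_s.
Qed.

End Lift.

Theorem tensor_dual_E_projective : E_projective laM raM (fun _ => True) laT raT.
Proof.
move=> Y Y' laY raY laY' raY' hY _ f [[f_add _ _] [s hs]] h [h_add h_l h_r].
have h_bimod : bimod_map laT raT laY' raY' h by split=> [x y | b x | x b]; [apply: h_add | apply: h_l | apply: h_r].
have [g [[g_add g_l g_r] fg]] := tensor_lift hY f_add hs h_bimod.
by exists g; split.
Qed.

End TensorDual.

Theorem mainTheorem6 (A B : pzRingType) (M : zmodType)
    (laM : B -> M -> M) (raM : M -> A -> M)
    (hM : bimod_law laM raM)
    (T : zmodType) (t : M -> (M -> B) -> T)
    (laT : B -> T -> T) (raT : T -> B -> T) (ev : T -> B)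
    (hT : is_tensor_dual laM raM t)
    (hTb : tensor_bimod laM t laT raT)
    (hev : is_ev laM t ev) :
  (separable_bimod laT raT ev \/ (forall x y : T, ev x = ev y -> x = y)) ->
  formally_smooth_bimod laM raM laT raT ev.
Proof.
rewrite /formally_smooth_bimod.
have ev_bimod := ev_bimod_map hT hTb hev.
have ev0 : ev 0 = 0 by case: hev => ev_add _; apply: additive_fun0.
case=> [[sigma [sigma_bimod ev_sigma]] | ev_inj].
- have [lawT _ _] := hTb.
  apply: (@E_projective_retract _ _ _ _ _ _ _ _ _ (kernel_proj ev sigma)).
  + exact: kernel_proj_bimod_map lawT _ _ ev_bimod sigma_bimod.
  + exact: kernel_proj_ker ev_bimod ev_sigma.
  + exact: kernel_proj_id sigma_bimod.
  + exact: tensor_dual_E_projective hT hTb.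
- apply: E_projective_zero => // x evx0.
  by apply: ev_inj; rewrite evx0 ev0.
Qed.
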